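(* Consider a Fragile multi-CPR Game with $n\ge1$ players and $m=1$ CPR satisfying the Assumption below, with constraint policies $\vartheta_i$ as defined below. Then the game admits a unique Generalized Nash equilibrium.
   Context: Let $n,m\ge1$ be integers and $[k]=\{1,\dots,k\}$. Let $C_m=\{(x_1,\dots,x_m)\in[0,1]^m:\sum_{j\in[m]}x_j\le1\}$, $\mathcal{C}_n=\prod_{i\in[n]}C_m$ and $\mathcal{C}_{-i}=\prod_{[n]\setminus\{i\}}C_m$. A strategy profile is $\mathbf{x}=(\mathbf{x}_1,\dots,\mathbf{x}_n)\in\mathcal{C}_n$, $\mathbf{x}_i=(x_{i1},\dots,x_{im})$; write $\mathbf{x}=(\mathbf{x}_i,\mathbf{x}_{-i})$. Put $\mathbf{x}_T^{(j)}=\sum_{i\in[n]}x_{ij}$ and $\mathbf{x}_T^{j|i}=\sum_{\ell\ne i}x_{\ell j}$. Each CPR $j$ has a return rate $\mathcal{R}_j(t)>1$ and failure probability $p_j(t)\in[0,1]$; each player $i$ has parameters $a_i,k_i$. Effective rate: $\mathcal{F}_{ij}(t)=(\mathcal{R}_j(t)-1)^{a_i}(1-p_j(t))-k_i p_j(t)$; utility: $\mathcal{V}_i(\mathbf{x}_i;\mathbf{x}_{-i})=\sum_{j}x_{ij}^{a_i}\mathcal{F}_{ij}(\mathbf{x}_T^{(j)})$. Assumption: (1) $p_j(0)=0$, $p_j(t)=1$ for $t\ge1$; (2) $a_i\in(0,1]$, $k_i>0$; (3) each $\mathcal{F}_{ij}$ (continuous on $[0,1]$) has strictly negative first and second derivatives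 on $(0,1)$. Let $\omega_{ij}\in(0,1)$ be the unique zero of $\mathcal{F}_{ij}$ in $(0,1)$. Active CPRs: $A(\mathbf{x}_{-i})=\{j:\mathbf{x}_T^{j|i}<\omega_{ij}\}$. Constraint policy: $\vartheta_i(\mathbf{x}_{-i})=C_m\cap\big(\prod_{j\in A(\mathbf{x}_{-i})}[0,\omega_{ij}-\mathbf{x}_T^{j|i}]\times\prod_{j\in[m]\setminus A(\mathbf{x}_{-i})}\{0\}\big)$. A Generalized Nash equilibrium (GNE) is $\mathbf{x}^*\in\mathcal{C}_n$ with, for all $i$, $\mathbf{x}^*_i\in\vartheta_i(\mathbf{x}^*_{-i})$ and $\mathcal{V}_i(\mathbf{x}^*_i;\mathbf{x}^*_{-i})\ge\mathcal{V}_i(\mathbf{y};\mathbf{x}^*_{-i})$ for all $\mathbf{y}\in\vartheta_i(\mathbf{x}^*_{-i})$. *)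

From HB Require Import structures.
From mathcomp Require Import all_boot all_order all_algebra.
From mathcomp Require Import all_classical all_reals all_analysis.
Set Implicit Arguments. Unset Strict Implicit. Unset Printing Implicit Defensive.
Import Order.TTheory GRing.Theory Num.Theory.
Import numFieldNormedType.Exports.
Local Open Scope classical_set_scope.
Local Open Scope ring_scope.

Section FragileGame.
Variables (R : realType) (n m : nat).
(* Rr j = return rate R_j, p j = failure probability p_j, a i, k i player params *)
Variables (Rr p : 'I_m -> R -> R) (a k : 'I_n -> R).

Definition Feff (i : 'I_n) (j : 'I_m) (t : R) : R :=
  (Rr j t - 1) `^ (a i) * (1 - p j t) - k i * p j t.

Definition inC (y : 'rV[R]_m) : Prop :=
  (forall j, 0 <= y 0 j <= 1) /\ \sum_(j < m) y 0 j <= 1.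

Definition profile (x : 'M[R]_(n, m)) : Prop := forall i, inC (row i x).

Definition others (x : 'M[R]_(n, m)) (i : 'I_n) (j : 'I_m) : R :=
  \sum_(l < n | l != i) x l j.

Definition util (i : 'I_n) (y : 'rV[R]_m) (x : 'M[R]_(n, m)) : R :=
  \sum_(j < m) (y 0 j) `^ (a i) * Feff i j (y 0 j + others x i j).

(* constraint policy theta_i(x_{-i}), given the zeros omega i j of F_ij *)
Definition theta (omega : 'I_n -> 'I_m -> R) (x : 'M[R]_(n, m)) (i : 'I_n)
  (y : 'rV[R]_m) : Prop :=
  inC y /\
  forall j, (others x i j < omega i j -> 0 <= y 0 j <= omega i j - others x i j)
         /\ (~ (others x i j < omega i j) -> y 0 j = 0).

Definition GNE (omega : 'I_n -> 'I_m -> R) (x : 'M[R]_(n, m)) : Prop :=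
  profile x /\
  forall i, theta omega x i (row i x) /\
    forall y, theta omega x i y -> util i y x <= util i (row i x) x.

End FragileGame.

From HB Require Import structures.
From mathcomp Require Import all_boot all_order all_algebra.
From mathcomp Require Import all_classical all_reals all_analysis.
From mathcomp Require Import lra ring.
Import Order.TTheory GRing.Theory Num.Theory.
Import numFieldNormedType.Exports.
Local Open Scope classical_set_scope.
Local Open Scope ring_scope.

(* With a single resource, player [i] facing the total [s] invested by the others
   maximises [z ^ a_i * F_i (z + s)] over [[0, omega_i - s]].  Concavity of [F_i]
   combined with Bernoulli's inequality makes the first-order condition
   [a_i F_i(T) + z F_i'(T) = 0] (with [T = z + s]) both necessary and sufficient,
   so at an equilibrium with total [T] player [i] invests
   [share_i T = max(0, a_i F_i(T) / - F_i'(T))].  Equilibria thus correspond to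
   the fixed points [T = sum_i share_i T] in [(0, 1)]; every [share_i] is
   continuous and nonincreasing, so the IVT yields a fixed point and monotonicity
   makes it unique. *)

Definition concave_decreasing {R : realType} (F : R -> R) :=
  {within `[0, 1], continuous F} /\
  (forall t, 0 < t < 1 ->
     derivable F t 1 /\ derive1 F t < 0 /\
     derivable (derive1 F) t 1 /\ derive1 (derive1 F) t < 0).

Definition payoff {R : realType} (al s : R) (F : R -> R) (z : R) : R :=
  z `^ al * F (z + s).

Definition share {R : realType} (al : R) (F : R -> R) (T : R) : R :=
  Order.max 0 (al * F T / - derive1 F T).

Lemma powR_le_bernoulli {R : realType} {z al : R} : 0 <= z -> 0 < al <= 1 ->
  z `^ al <= 1 + al * (z - 1).
Proof.
move=> z0 /andP[al0]; rewrite le_eqVlt => /orP[/eqP ->|al1].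
  by rewrite powRr1 // mul1r addrC subrK.
have q0 : 0 < (1 - al)^-1 by rewrite invr_gt0 subr_gt0.
have p0 : 0 < al^-1 by rewrite invr_gt0.
have pq : al^-1^-1 + (1 - al)^-1^-1 = 1 by rewrite !invrK addrC subrK.
have := conjugate_powR (powR_ge0 z al) ler01 p0 q0 pq.
rewrite -powRrM mulfV ?gt_eqF // powRr1 // powR1 mulr1 !invrK => young.
by apply: (le_trans young); lra.
Qed.

Section ConcaveDecreasingRate.
Context {R : realType} {F : R -> R}.
Hypothesis HF : concave_decreasing F.

Lemma rate_decr {x y : R} : 0 <= x -> y <= 1 -> x < y -> F y < F x.
Proof.
case: HF => Fc dF x0 y1 xy; apply: (@ltr0_derive1_lt_cc R F 0 1) => //.
- by move=> t; rewrite in_itv /= => /dF [].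
- by move=> t; rewrite in_itv /= => /dF [_ []].
- by rewrite in_itv /=; apply/andP; split; lra.
- by rewrite in_itv /=; apply/andP; split; lra.
Qed.

Lemma rate_derive_lt0 {t : R} : 0 < t < 1 -> derive1 F t < 0.
Proof. by case: HF => _ dF /dF [_ []]. Qed.

Lemma rate_is_derive {t : R} : 0 < t < 1 -> is_derive t 1 F (derive1 F t).
Proof. by case: HF => _ dF /dF [dFt _]; rewrite derive1E; apply: derivableP. Qed.

Lemma rate_continuous_at {t : R} : 0 < t < 1 -> {for t, continuous F}.
Proof.
by case: HF => _ dF /dF [dFt _]; apply/differentiable_continuous/derivable1_diffP.
Qed.

Lemma rate_derive_continuous_at {t : R} : 0 < t < 1 ->
  {for t, continuous (derive1 F)}.
Proof.
case: HF => _ dF /dF [_ [_ [dF't _]]].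
exact/differentiable_continuous/derivable1_diffP.
Qed.

Lemma rate_derive_decr {x y : R} : 0 < x -> y < 1 -> x < y ->
  derive1 F y < derive1 F x.
Proof.
case: HF => _ dF x0 y1 xy; apply: (@ltr0_derive1_lt_oo R (derive1 F) 0 1) => //.
- by move=> t; rewrite in_itv /= => /dF [_ [_ []]].
- by move=> t; rewrite in_itv /= => /dF [_ [_ [_]]].
- by move=> t; rewrite inE /= in_itv /=; apply: rate_derive_continuous_at.
- by rewrite in_itv /=; apply/andP; split; lra.
- by rewrite in_itv /=; apply/andP; split; lra.
Qed.

Lemma rate_continuous_within {u v : R} : 0 <= u -> v <= 1 ->
  {within `[u, v], continuous F}.
Proof.
case: HF => Fc _ u0 v1; apply: continuous_subspaceW Fc => x /=.
by rewrite !in_itv /= => /andP[ux xv]; apply/andP; split; lra.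
Qed.

Lemma rate_le_tangent {t0 t : R} : 0 < t0 < 1 -> 0 <= t <= 1 ->
  F t <= F t0 + derive1 F t0 * (t - t0).
Proof.
move=> /andP[t00 t01] /andP[t0' t1].
have dF (u v : R) : 0 <= u -> v <= 1 ->
    forall x : R, x \in `]u, v[ -> is_derive x 1 F (derive1 F x).
  move=> u0 v1 x; rewrite in_itv /= => /andP[ux xv].
  by apply: rate_is_derive; apply/andP; split; lra.
case: (ltgtP t t0) => [tt0|t0t|->]; last by rewrite subrr mulr0 addr0.
- have [c] := MVT tt0 (dF _ _ t0' (ltW t01)) (rate_continuous_within t0' (ltW t01)).
  rewrite in_itv /= => /andP[tc ct0] Fc.
  have : derive1 F t0 * (t0 - t) <= derive1 F c * (t0 - t).
    by rewrite ler_pM2r ?subr_gt0 // ltW // rate_derive_decr //; apply: le_lt_trans tc.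
  by rewrite -Fc; nra.
- have [c] := MVT t0t (dF _ _ (ltW t00) t1) (rate_continuous_within (ltW t00) t1).
  rewrite in_itv /= => /andP[t0c ct] Fc.
  have : derive1 F c * (t - t0) <= derive1 F t0 * (t - t0).
    by rewrite ler_pM2r ?subr_gt0 // ltW // rate_derive_decr //; apply: lt_le_trans t1.
  nra.
Qed.

(* Concavity bounds [F (z + s)] by [F (x + s) (1 - al u)] with [z = x (1 + u)],
   Bernoulli bounds [(1 + u) `^ al] by [1 + al u], and the product of the two
   bounds is [1 - (al u)^2 <= 1]. *)
Lemma payoff_le_of_foc {al s x z : R} :
  0 < al <= 1 -> 0 <= s -> 0 < x -> x + s < 1 ->
  al * F (x + s) + x * derive1 F (x + s) = 0 ->
  0 <= z -> z + s <= 1 -> 0 <= F (z + s) ->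
  payoff al s F z <= payoff al s F x.
Proof.
move=> al01 s0 x0 xs1 foc z0 zs1 Fz0.
have xs01 : 0 < x + s < 1 by apply/andP; split; lra.
have Fx0 : 0 < F (x + s) by have := rate_derive_lt0 xs01; nra.
set u := z / x - 1.
have u1 : 0 <= 1 + u by rewrite /u addrC subrK divr_ge0 // ltW.
have zE : z = x * (1 + u) by rewrite /u addrC subrK mulrCA divff ?gt_eqF // mulr1.
have zs01 : 0 <= z + s <= 1 by apply/andP; split; lra.
have Fz : F (z + s) <= F (x + s) * (1 - al * u).
  have := rate_le_tangent xs01 zs01.
  have -> : z + s - (x + s) = x * u by rewrite zE; ring.
  nra.
have bern : (1 + u) `^ al <= 1 + al * u.
  by have := powR_le_bernoulli u1 al01; rewrite [1 + u - 1]addrC addKr.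
rewrite /payoff {1}zE powRM ?(ltW x0) // -mulrA ler_pM2l ?powR_gt0 //.
have bern0 : 0 <= 1 + al * u by apply: le_trans bern; apply: powR_ge0.
apply: (le_trans (ler_wpM2r Fz0 bern)); apply: (le_trans (ler_wpM2l bern0 Fz)).
have : 0 <= F (x + s) * (al * u) ^+ 2 by apply: mulr_ge0; [exact: ltW|exact: sqr_ge0].
have -> : (1 + al * u) * (F (x + s) * (1 - al * u)) =
  F (x + s) - F (x + s) * (al * u) ^+ 2 by ring.
lra.
Qed.

Lemma is_derive_payoff (al s y : R) : 0 < y -> 0 < y + s < 1 ->
  is_derive y 1 (payoff al s F)
    (y `^ al * (derive1 F (y + s) * (1 + 0)) + F (y + s) * (al * y `^ (al - 1))).
Proof.
move=> y0 ys01; apply: is_deriveM; first exact: is_derive1_powR.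
exact: (@is_derive1_comp R F (fun z => z + s) y _ _ (rate_is_derive ys01)
  (is_deriveD (is_derive_id y 1) (is_derive_cst s y 1))).
Qed.

Section RateWithZero.
Context {om : R}.
Hypotheses (om01 : 0 < om < 1) (F_om : F om = 0).

Lemma rate_gt0E {T : R} : 0 <= T <= 1 -> (0 < F T) = (T < om).
Proof.
move: om01 => /andP[om0 om1] /andP[T0 T1].
case: (ltgtP T om) => [lt|gt|->]; last by rewrite F_om ltxx.
- by rewrite -F_om; apply: rate_decr => //; lra.
- by apply/negbTE; rewrite -leNgt -F_om; apply/ltW/rate_decr => //; lra.
Qed.

Lemma rate_ge0 {T : R} : 0 <= T <= om -> 0 <= F T.
Proof.
move: om01 => /andP[_ om1] /andP[T0]; rewrite le_eqVlt => /orP[/eqP ->|Tom].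
  by rewrite F_om.
by apply: ltW; rewrite rate_gt0E //; apply/andP; split; lra.
Qed.

(* The payoff vanishes at both ends of [0, om - s] and is positive inside, so a
   maximiser is an interior critical point. *)
Lemma foc_of_payoff_max {al s y : R} : 0 < al <= 1 -> 0 <= s -> s < om ->
  0 <= y <= om - s ->
  (forall z, 0 <= z <= om - s -> payoff al s F z <= payoff al s F y) ->
  [/\ 0 < y, y + s < om & al * F (y + s) + y * derive1 F (y + s) = 0].
Proof.
move: om01 => /andP[om0 om1] /andP[al0 al1] s0 som /andP[y0 yw] ymax.
have payoff_y_gt0 : 0 < payoff al s F y.
  apply: lt_le_trans (ymax ((om - s) / 2) _); last by apply/andP; split; lra.
  apply: mulr_gt0; first by apply: powR_gt0; lra.
  by rewrite -F_om; apply: rate_decr; lra.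
have y_gt0 : 0 < y.
  rewrite lt_def y0 andbT; apply: contraTneq payoff_y_gt0 => ->.
  by rewrite /payoff powR0 ?gt_eqF // mul0r ltxx.
have y_lt : y < om - s.
  rewrite lt_def yw andbT; apply: contraTneq payoff_y_gt0 => <-.
  by rewrite /payoff subrK F_om mulr0 ltxx.
have ys01 : 0 < y + s < 1 by apply/andP; split; lra.
have crit : is_derive y 1 (payoff al s F) 0.
  apply: (@derive1_at_max R _ 0 (om - s) y); first lra.
  - move=> t; rewrite in_itv /= => /andP[t0 tw]; apply: ex_derive.
    by apply: is_derive_payoff => //; apply/andP; split; lra.
  - by rewrite in_itv /= y_gt0 y_lt.
  - move=> t; rewrite in_itv /= => /andP[t0 tw].
    by apply: ymax; apply/andP; split; lra.
have E := etrans (esym (@derive_val _ _ _ _ _ _ _ crit))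
  (@derive_val _ _ _ _ _ _ _ (is_derive_payoff al s y y_gt0 ys01)).
have yE : y * y `^ (al - 1) = y `^ al by apply: mulr_powRB1; rewrite ?ltW.
have : y `^ al * (al * F (y + s) + y * derive1 F (y + s)) = 0.
  by rewrite -[RHS](mulr0 y) E addr0 mulr1 -yE; ring.
move/eqP; rewrite mulf_eq0 gt_eqF ?powR_gt0 //= => /eqP foc.
by split => //; lra.
Qed.

End RateWithZero.

Section Share.
Context {al T : R}.
Hypotheses (al_gt0 : 0 < al) (T01 : 0 < T < 1).

Lemma shareE : 0 < F T -> share al F T = al * F T / - derive1 F T.
Proof.
move=> FT; have F'T := rate_derive_lt0 T01.
rewrite /share max_r //; apply: divr_ge0; last by lra.
exact: mulr_ge0 (ltW al_gt0) (ltW FT).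
Qed.

Lemma share_gt0 : 0 < F T -> 0 < share al F T.
Proof.
move=> FT; rewrite shareE //; have F'T := rate_derive_lt0 T01.
by apply: divr_gt0; [apply: mulr_gt0|lra].
Qed.

Lemma share_eq0 : F T <= 0 -> share al F T = 0.
Proof.
move=> FT; have F'T := rate_derive_lt0 T01.
rewrite /share max_l // mulrC pmulr_rle0 ?invr_gt0; last by lra.
by apply: mulr_ge0_le0; [exact: ltW|].
Qed.

Lemma share_foc : 0 < F T -> al * F T + share al F T * derive1 F T = 0.
Proof.
move=> FT; have F'T := rate_derive_lt0 T01.
by rewrite shareE //; field; rewrite lt_eqF.
Qed.

Lemma foc_share y : 0 < F T -> al * F T + y * derive1 F T = 0 -> y = share al F T.
Proof.
move=> FT foc; have F'T := rate_derive_lt0 T01.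
rewrite shareE // -[al * F T](addrK (y * derive1 F T)) foc sub0r.
by field; rewrite lt_eqF.
Qed.

Lemma share_continuous_at : {for T, continuous (share al F)}.
Proof.
apply: (@continuous_max _ _ (fun=> 0) (fun t => al * F t / - derive1 F t)).
  exact: cst_continuous.
apply: continuousM; first apply: continuousM.
- exact: cst_continuous.
- exact: rate_continuous_at.
- apply: continuousV; first by rewrite oppr_eq0 lt_eqF // rate_derive_lt0.
  exact/continuousN/rate_derive_continuous_at.
Qed.

End Share.

(* As [T] grows, [F T] decreases and [- F'(T)] increases. *)
Lemma share_noninc al T1 T2 : 0 < al -> 0 < T1 -> T1 <= T2 -> T2 < 1 ->
  share al F T2 <= share al F T1.
Proof.
move=> al0 T10 T12 T21.
have T1I : 0 < T1 < 1 by apply/andP; split; lra.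
have T2I : 0 < T2 < 1 by apply/andP; split; lra.
have [F2|F2] := leP (F T2) 0; first by rewrite share_eq0 // /share le_max lexx.
move: T12; rewrite le_eqVlt => /orP[/eqP -> //|T12].
have F12 := rate_decr (ltW T10) (ltW T21) T12.
have D12 := rate_derive_decr T10 T21 T12.
have D1 := rate_derive_lt0 T1I; have D2 := rate_derive_lt0 T2I.
rewrite !shareE //; last by lra.
rewrite ler_pdivrMr; last by lra.
rewrite mulrAC ler_pdivlMr; last by lra.
rewrite -!mulrA ler_pM2l //; nra.
Qed.

End ConcaveDecreasingRate.

Section ShareFixpoint.
Context {R : realType} {n : nat}.
Variables (F : 'I_n -> R -> R) (al : 'I_n -> R).
Hypotheses (HF : forall i, concave_decreasing (F i)) (al_gt0 : forall i, 0 < al i).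

Definition total_share (T : R) : R := \sum_i share (al i) (F i) T.

Definition share_profile (T : R) : 'M[R]_(n, 1) :=
  \matrix_(i, j) share (al i) (F i) T.

Lemma total_share_fixpoint_unique {T1 T2 : R} : 0 < T1 < 1 -> 0 < T2 < 1 ->
  T1 = total_share T1 -> T2 = total_share T2 -> T1 = T2.
Proof.
wlog T12 : T1 T2 / T1 <= T2.
  move=> W T1I T2I E1 E2; have [T12|T21] := leP T1 T2; first exact: W.
  by apply/esym/W => //; apply: ltW.
move=> /andP[T10 _] /andP[_ T21] E1 E2.
have : total_share T2 <= total_share T1.
  by apply: ler_sum => i _; apply: share_noninc.
rewrite -E1 -E2; lra.
Qed.

Variable om : 'I_n -> R.
Hypotheses (om01 : forall i, 0 < om i < 1) (F_om : forall i, F i (om i) = 0).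

Lemma total_share_eq0 T : (forall i, om i <= T) -> T < 1 -> total_share T = 0.
Proof.
move=> omT T1; apply: big1 => i _; have /andP[om0 _] := om01 i.
have T01 : 0 < T < 1 by apply/andP; split; [exact: lt_le_trans (omT i)|].
apply: share_eq0 => //; rewrite leNgt (rate_gt0E (HF i) (om01 i) (F_om i)).
  by rewrite -leNgt.
by apply/andP; split; lra.
Qed.

Lemma total_share_continuous_at T : 0 < T < 1 -> {for T, continuous total_share}.
Proof.
move=> T01; rewrite /total_share -fct_sumE.
apply: (big_ind (fun g : R -> R => {for T, continuous g})) => //.
- exact: cst_continuous.
- by move=> g1 g2; apply: continuousD.
- by move=> i _; apply: share_continuous_at.
Qed.

(* IVT for [T - total_share T] on [[e, max om]]: at the right end every share
   vanishes, and for small [e] the share of one player already exceeds [e]. *)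
Lemma total_share_fixpoint_exists : (0 < n)%N ->
  exists2 T, 0 < T < 1 & T = total_share T.
Proof.
move=> n_gt0; pose i0 : 'I_n := Ordinal n_gt0.
have /andP[om0 om1] := om01 i0.
pose w := om i0 / 2.
have w01 : 0 < w < 1 by apply/andP; split; rewrite /w; lra.
have Fw : 0 < F i0 w.
  by rewrite (rate_gt0E (HF i0) (om01 i0) (F_om i0)) /w; [lra|apply/andP; split; lra].
pose c := share (al i0) (F i0) w.
have c0 : 0 < c by apply: share_gt0.
pose e := Order.min w c.
have e0 : 0 < e by rewrite lt_min c0 andbT; case/andP: w01.
have [ew ec] : e <= w /\ e <= c by split; rewrite ge_min lexx ?orbT.
pose M := \big[Order.max/0]_i om i.
have M1 : M < 1 by apply: bigmax_lt => // i _; case/andP: (om01 i).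
have omM i : om i <= M by apply: le_bigmax.
have eM : e <= M by have := omM i0; rewrite /w in ew; lra.
have c_le : c <= total_share e.
  rewrite /total_share (bigD1 i0) //= -[c]addr0; apply: lerD.
    by apply: share_noninc => //; lra.
  by apply: sumr_ge0 => i _; rewrite /share le_max lexx.
have cont : {within `[e, M], continuous (fun T => T - total_share T)}.
  apply: continuous_in_subspaceT => T; rewrite inE /= in_itv /= => /andP[eT TM].
  apply: (@continuousD _ _ _ id (fun t => - total_share t)); first exact: cvg_id.
  by apply/continuousN/total_share_continuous_at; apply/andP; split; lra.
have [|T] := @IVT R _ e M 0 eM cont.
  rewrite /= (total_share_eq0 M omM M1) subr0 ge_min le_max.
  by apply/andP; split; apply/orP; [left|right]; lra.
rewrite in_itv /= => /andP[eT TM] /eqP; rewrite subr_eq0 => /eqP TE.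
by exists T => //; apply/andP; split; lra.
Qed.

End ShareFixpoint.

Section SingleResourceGame.
Context {R : realType} {n : nat} {Rr p : 'I_1 -> R -> R} {a k : 'I_n -> R}
  {omega : 'I_n -> 'I_1 -> R}.
Local Notation F i := (Feff Rr p a k i 0).
Local Notation GNE := (GNE Rr p a k omega).
Local Notation total_share := (total_share (fun i => F i) a).
Local Notation share_profile := (share_profile (fun i => F i) a).
Hypotheses (a01 : forall i, 0 < a i <= 1) (HF : forall i, concave_decreasing (F i))
  (omega01 : forall i, 0 < omega i 0 < 1) (F_omega : forall i, F i (omega i 0) = 0).

Lemma util_single i z x :
  util Rr p a k i z x = payoff (a i) (others x i 0) (F i) (z 0 0).
Proof. by rewrite /util big_ord1. Qed.

Lemma sum_col_others (x : 'M[R]_(n, 1)) i : \sum_l x l 0 = x i 0 + others x i 0.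
Proof. by rewrite /others (bigD1 i). Qed.

Lemma theta_single x i z : theta omega x i z <->
  [/\ 0 <= z 0 0 <= 1,
      others x i 0 < omega i 0 -> 0 <= z 0 0 <= omega i 0 - others x i 0
    & ~ others x i 0 < omega i 0 -> z 0 0 = 0].
Proof.
split=> [[[z01 _] th]|[z01 th1 th2]].
  by split; [exact: z01|exact: (th 0).1|exact: (th 0).2].
split; first split.
- by move=> j; rewrite (ord1 j).
- by rewrite big_ord1; case/andP: z01.
- by move=> j; rewrite (ord1 j).
Qed.

Lemma GNE_ge0 y : GNE y -> forall l, 0 <= y l 0.
Proof. by move=> [prof _] l; case: (prof l) => /(_ 0); rewrite mxE => /andP[]. Qed.

Lemma GNE_best_response i {y} : GNE y ->
  (others y i 0 < omega i 0 ->
    [/\ 0 < y i 0, y i 0 + others y i 0 < omega i 0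
      & a i * F i (y i 0 + others y i 0) +
          y i 0 * derive1 (F i) (y i 0 + others y i 0) = 0]) /\
  (~ others y i 0 < omega i 0 -> y i 0 = 0).
Proof.
move=> GNEy; have s0 : 0 <= others y i 0 by apply: sumr_ge0 => l _; apply: GNE_ge0.
have [/theta_single [_ th1 th2] opt] := GNEy.2 i; rewrite mxE in th1 th2.
split=> // som; have /andP[_ om1] := omega01 i.
apply: (foc_of_payoff_max (HF i) (omega01 i) (F_omega i) (a01 i) s0 som (th1 som)).
move=> z z_le; have := opt (const_mx z); rewrite !util_single !mxE; apply.
apply/theta_single; rewrite !mxE; split=> [|//|/(_ som)//].
by case/andP: z_le => ? ?; apply/andP; split; lra.
Qed.

Lemma GNE_sum_gt0 {y} : (0 < n)%N -> GNE y -> exists j, 0 < y j 0.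
Proof.
move=> n_gt0 GNEy; apply: contrapT => no_pos; pose i0 : 'I_n := Ordinal n_gt0.
have y0 l : y l 0 = 0.
  apply/eqP; rewrite eq_le GNE_ge0 // andbT leNgt.
  by apply/negP => y_pos; apply: no_pos; exists l.
have s0 : others y i0 0 = 0 by apply: big1 => l _.
have som : others y i0 0 < omega i0 0 by rewrite s0; case/andP: (omega01 i0).
have [+ _ _] := (GNE_best_response i0 GNEy).1 som.
by rewrite y0 ltxx.
Qed.

Lemma GNE_total_in01 {y} : (0 < n)%N -> GNE y -> 0 < \sum_l y l 0 < 1.
Proof.
move=> n_gt0 GNEy; have [j yj] := GNE_sum_gt0 n_gt0 GNEy.
have s0 : 0 <= others y j 0 by apply: sumr_ge0 => l _; apply: GNE_ge0.
have [BRpos BR0] := GNE_best_response j GNEy.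
have /andP[_ om1] := omega01 j.
have [som|som] := pselect (others y j 0 < omega j 0); last first.
  by move: yj; rewrite (BR0 som) ltxx.
have [_ yT _] := BRpos som.
by rewrite (sum_col_others y j); apply/andP; split; lra.
Qed.

Lemma GNE_eq_share_profile {y} : (0 < n)%N -> GNE y ->
  y = share_profile (\sum_l y l 0).
Proof.
move=> n_gt0 GNEy; have T01 := GNE_total_in01 n_gt0 GNEy.
have T01c : 0 <= \sum_l y l 0 <= 1 by case/andP: T01 => ? ?; apply/andP; split; lra.
apply/matrixP => i j; rewrite (ord1 j) mxE.
have [a_gt0 _] := andP (a01 i).
have FiE := rate_gt0E (HF i) (omega01 i) (F_omega i) T01c.
have [BRpos BR0] := GNE_best_response i GNEy.
have [som|som] := pselect (others y i 0 < omega i 0).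
- have [y_pos yT foc] := BRpos som; rewrite -sum_col_others in yT foc.
  by apply: (foc_share (HF i) a_gt0 T01) foc; rewrite FiE.
- rewrite (BR0 som) (share_eq0 (HF i) a_gt0 T01) // leNgt FiE.
  by rewrite (sum_col_others y i) (BR0 som) add0r; apply/negP.
Qed.

Lemma GNE_total_share_fixpoint {y} : (0 < n)%N -> GNE y ->
  \sum_l y l 0 = total_share (\sum_l y l 0).
Proof.
move=> n_gt0 GNEy; rewrite {1}(GNE_eq_share_profile n_gt0 GNEy).
by apply: eq_bigr => i _; rewrite mxE.
Qed.

Section ShareProfile.
Variable T : R.
Hypotheses (T01 : 0 < T < 1) (T_fix : T = total_share T).
Local Notation x := (share_profile T).

Let F_gt0E i : (0 < F i T) = (T < omega i 0).
Proof.
apply: (rate_gt0E (HF i) (omega01 i) (F_omega i)).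
by case/andP: T01 => ? ?; apply/andP; split; lra.
Qed.

Lemma share_profile_ge0 i : 0 <= x i 0.
Proof. by rewrite mxE /share le_max lexx. Qed.

Lemma share_profile_sum_others i : x i 0 + others x i 0 = T.
Proof.
by rewrite -sum_col_others [RHS]T_fix; apply: eq_bigr => l _; rewrite mxE.
Qed.

Lemma share_profile_foc i : T < omega i 0 ->
  0 < x i 0 /\ a i * F i T + x i 0 * derive1 (F i) T = 0.
Proof.
rewrite -F_gt0E mxE => FT; have [a_gt0 _] := andP (a01 i).
by split; [exact: share_gt0|exact: share_foc].
Qed.

Lemma share_profile_eq0 i : ~ T < omega i 0 -> x i 0 = 0.
Proof.
move/negP; rewrite -F_gt0E -leNgt mxE => FT; have [a_gt0 _] := andP (a01 i).
exact: share_eq0.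
Qed.

Lemma share_profile_others_lt i : (others x i 0 < omega i 0) = (T < omega i 0).
Proof.
have xs := share_profile_sum_others i; have x0 := share_profile_ge0 i.
apply/idP/idP => [som|Tom]; last by lra.
apply: contraTT som => /negP Tom.
by move: xs; rewrite share_profile_eq0 // add0r => ->; apply/negP.
Qed.

Lemma share_profile_best_response i :
  theta omega x i (row i x) /\
  forall z, theta omega x i z -> util Rr p a k i z x <= util Rr p a k i (row i x) x.
Proof.
have xs := share_profile_sum_others i; have x0 := share_profile_ge0 i.
have s0 : 0 <= others x i 0 by apply: sumr_ge0 => l _; apply: share_profile_ge0.
have /andP[_ T1] := T01.
split.
  apply/theta_single; rewrite mxE share_profile_others_lt; split.
  - by apply/andP; split; lra.
  - by move=> Tom; apply/andP; split; lra.
  - exact: share_profile_eq0.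
move=> z /theta_single []; rewrite share_profile_others_lt !util_single mxE.
move=> z01 zin zout; have [Tom|Tom] := pselect (T < omega i 0); last first.
  by rewrite zout // share_profile_eq0.
have [x_pos foc] := share_profile_foc i Tom; have /andP[z0 zle] := zin Tom.
have /andP[_ om1] := omega01 i.
apply: (payoff_le_of_foc (HF i) (a01 i) s0 x_pos); rewrite ?xs //; first lra.
by apply: (rate_ge0 (HF i) (omega01 i) (F_omega i)); apply/andP; split; lra.
Qed.

Lemma share_profile_GNE : GNE x.
Proof.
split=> [i|i]; last exact: share_profile_best_response.
by have [[] + _] := share_profile_best_response i.
Qed.

End ShareProfile.

End SingleResourceGame.

Theorem theorem3 (R : realType) (n : nat) (Rr p : 'I_1 -> R -> R)
  (a k : 'I_n -> R) (omega : 'I_n -> 'I_1 -> R) :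
  (0 < n)%N ->
  (forall j t, 0 <= t -> 1 < Rr j t) ->
  (forall j t, 0 <= t -> 0 <= p j t <= 1) ->
  (forall j, p j 0 = 0) ->
  (forall j t, 1 <= t -> p j t = 1) ->
  (forall i, 0 < a i <= 1) ->
  (forall i, 0 < k i) ->
  (forall i j, {within `[0, 1]%classic, continuous (Feff Rr p a k i j)}) ->
  (forall i j t, 0 < t < 1 ->
     derivable (Feff Rr p a k i j) t 1 /\ (derive1 (Feff Rr p a k i j)) t < 0 /\
     derivable ((derive1 (Feff Rr p a k i j))) t 1 /\
     derive1 (derive1 (Feff Rr p a k i j)) t < 0) ->
  (forall i j, 0 < omega i j < 1 /\ Feff Rr p a k i j (omega i j) = 0) ->
  exists x : 'M[R]_(n, 1),
    GNE Rr p a k omega x /\ forall y, GNE Rr p a k omega y -> y = x.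
Proof.
move=> n_gt0 _ _ _ _ a01 _ F_cont F_deriv omega_root.
have HF i : concave_decreasing (Feff Rr p a k i 0).
  by split; [exact: F_cont|exact: F_deriv].
have omega01 i := (omega_root i 0).1; have F_omega i := (omega_root i 0).2.
have a_gt0 i : 0 < a i by case/andP: (a01 i).
have [T T01 T_fix] := total_share_fixpoint_exists _ _ HF a_gt0 _ omega01 F_omega n_gt0.
exists (share_profile (fun i => Feff Rr p a k i 0) a T); split.
  exact: share_profile_GNE a01 HF omega01 F_omega T T01 T_fix.
move=> y GNEy; have T'01 := GNE_total_in01 a01 HF omega01 F_omega n_gt0 GNEy.
have T'_fix := GNE_total_share_fixpoint a01 HF omega01 F_omega n_gt0 GNEy.
rewrite (GNE_eq_share_profile a01 HF omega01 F_omega n_gt0 GNEy).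
by rewrite (total_share_fixpoint_unique _ _ HF a_gt0 T'01 T01 T'_fix T_fix).
Qed.
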